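(* Let $0\le\ell\le r$ and let $a_1,b_1,\dots,a_s,b_s\ge0$ be integers with $\sum_{i=1}^s a_i+\sum_{i=1}^s b_i=\ell$. Put $k=\sum_{i=1}^s a_i$. Then the ideal $S^{a_1}L^{b_1}S^{a_2}L^{b_2}\cdots S^{a_s}L^{b_s}(p)\subseteq R_\ell$ (operators applied successively starting from $(p)=p\mathbb{Z}\subseteq R_0$) depends only on $k$, and $$S^{a_1}L^{b_1}\cdots S^{a_s}L^{b_s}(p)=S^kL^{\ell-k}(p)=L^{\ell-k}S^k(p)=J_{\ell,0}(p^{k+1}).$$
   Context: Fix a prime $p$ and an integer $r\ge0$. For $0\le k\le r$ let $R_k$ be the commutative ring which is free as a $\mathbb{Z}$-module with basis $X_{k,0},\dots,X_{k,k}$ and multiplication $X_{k,i}X_{k,j}=p^{k-\max(i,j)}X_{k,\min(i,j)}$; thus $X_{k,k}=1$, and an integer $n$ is identified with $nX_{k,k}$. For $0\le k\le\ell\le r$ define: the additive map $\mathrm{ind}^\ell_k:R_k\to R_\ell$, $X_{k,i}\mapsto X_{\ell,i}$; the ring homomorphism $\mathrm{res}^\ell_k:R_\ell\to R_k$, $\mathrm{res}^\ell_k(X_{\ell,i})=p^{\ell-k}X_{k,i}$ if $i\le k$ and $=p^{\ell-i}$ if $i\ge k$; and the multiplicative map $\mathrm{jnd}^\ell_k:R_k\to R_\ell$, $$\mathrm{jnd}^\ell_k\Big(\sum_{i=0}^k m_iX_{k,i}\Big)=m_kX_{\ell,\ell}+\sum_{k\le i<\ell}\frac{m_k^{p^{\ell-i}}-m_k^{p^{\ell-i-1}}}{p^{\ell-i}}X_{\ell,i}+\sum_{0\le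 i<k}\frac{(\sum_{s=i}^k m_sp^{k-s})^{p^{\ell-k}}-(\sum_{s=i+1}^k m_sp^{k-s})^{p^{\ell-k}}}{p^{\ell-i}}X_{\ell,i}$$ ($m_i\in\mathbb{Z}$). For $1\le k\le r$ and an ideal $I\subseteq R_{k-1}$: $L(I)=(\mathrm{res}^k_{k-1})^{-1}(I)\subseteq R_k$, and $S(I)$ is the ideal of $R_k$ generated by $\mathrm{ind}^k_{k-1}(I)\cup\mathrm{jnd}^k_{k-1}(I)$; $L^n,S^n$ are iterates (each step raising the index by one). For $0\le i\le\ell$, $F_{\ell,i}=X_{\ell,i}-p^{\ell-i}$; for $0\le k\le\ell$ and $x\in\mathbb{Z}$, $J_{\ell,k}(x)\subseteq R_\ell$ is the ideal generated by $x,F_{\ell,k},\dots,F_{\ell,\ell-1}$ if $k\le\ell-1$, and $J_{\ell,\ell}(x)=xR_\ell$. *)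

From HB Require Import structures.
From mathcomp Require Import all_boot all_order all_algebra.
Unset Printing Implicit Defensive.
Import Order.TTheory GRing.Theory Num.Theory.
Local Open Scope ring_scope.

(* The ring R_k, as the Z-module with basis X_{k,0},...,X_{k,k}:
   an element is its coefficient vector (x i = coefficient of X_{k,i}). *)
Definition R (k : nat) := {ffun 'I_k.+1 -> int}.

Definition coef (k : nat) (x : R k) (n : nat) : int :=
  if (n < k.+1)%N then x (inord n) else 0.

Definition zeroR (k : nat) : R k := [ffun _ => 0].
Definition addR (k : nat) (x y : R k) : R k := [ffun i => x i + y i].

Definition X (k : nat) (i : nat) : R k := [ffun j : 'I_k.+1 => ((j : nat) == i)%:R].

(* the integer n, identified with n X_{k,k} *)
Definition cst (k : nat) (n : int) : R k :=
  [ffun j : 'I_k.+1 => if (j : nat) == k then n else 0].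

(* multiplication: X_{k,i} X_{k,j} = p^(k - max(i,j)) X_{k,min(i,j)}, bilinear *)
Definition mulR (p k : nat) (x y : R k) : R k :=
  [ffun m : 'I_k.+1 => \sum_(i < k.+1) \sum_(j < k.+1)
      (if minn i j == m then x i * y j * (p ^ (k - maxn i j))%:Z else 0)].

Definition ind (k l : nat) (x : R k) : R l := [ffun i : 'I_l.+1 => coef k x i].

(* res^l_k : X_{l,i} |-> p^(l-k) X_{k,i} (i <= k), p^(l-i) (i >= k) *)
Definition res (p k l : nat) (y : R l) : R k :=
  [ffun j : 'I_k.+1 =>
     if (j < k)%N then (p ^ (l - k))%:Z * coef l y j
     else \sum_(k <= i < l.+1) (p ^ (l - i))%:Z * coef l y i].

(* jnd^l_k (multiplicative map); divisions are exact integer divisions *)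
Definition jnd (p k l : nat) (x : R k) : R l :=
  let m := coef k x in
  [ffun i : 'I_l.+1 =>
     if (i : nat) == l then m k
     else if (k <= i)%N then
       ((m k ^+ (p ^ (l - i)) - m k ^+ (p ^ (l - i - 1))) %/ (p ^ (l - i))%:Z)%Z
     else
       (((\sum_(i <= s < k.+1) m s * (p ^ (k - s))%:Z) ^+ (p ^ (l - k))
         - (\sum_(i.+1 <= s < k.+1) m s * (p ^ (k - s))%:Z) ^+ (p ^ (l - k)))
          %/ (p ^ (l - i))%:Z)%Z].

Definition ideal_eq (k : nat) (I J : R k -> Prop) : Prop := forall x, I x <-> J x.

Definition gen (p k : nat) (G : R k -> Prop) : R k -> Prop :=
  fun x => exists s : seq (R k * R k),
    (forall q, q \in s -> G q.2) /\
    x = foldr (fun q acc => addR k (mulR p k q.1 q.2) acc) (zeroR k) s.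

Definition Lop (p k : nat) (I : R k -> Prop) : R k.+1 -> Prop :=
  fun y => I (res p k k.+1 y).

Definition Sop (p k : nat) (I : R k -> Prop) : R k.+1 -> Prop :=
  gen p k.+1 (fun y => exists x, I x /\ (y = @ind k k.+1 x \/ y = @jnd p k k.+1 x)).

Definition pZ (p : nat) : R 0 -> Prop := gen p 0 (fun y => y = cst 0 (p%:Z)).

(* A word w of operators (true = S, false = L), head = outermost (leftmost)
   operator; word_ideal p l w is  w (p) subset of R_l  when size w = l. *)
Fixpoint word_ideal (p l : nat) (w : seq bool) {struct l} : R l -> Prop :=
  match l as l0 return R l0 -> Prop with
  | 0 => pZ p
  | l'.+1 => match w with
    | b :: w' => (if b then @Sop p l' else @Lop p l') (@word_ideal p l' w')
    | [::] => fun _ => False end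
  end.

Definition mixed_word (s : nat) (a b : 'I_s -> nat) : seq bool :=
  flatten [seq nseq (a i) true ++ nseq (b i) false | i <- enum 'I_s].

Definition F (p l i : nat) : R l := addR l (X l i) (cst l (- (p ^ (l - i))%:Z)).

Definition J (p l k : nat) (x : int) : R l -> Prop :=
  gen p l (fun y => y = cst l x \/ exists i : nat, (k <= i < l)%N /\ y = F p l i).

From HB Require Import structures.
From mathcomp Require Import all_boot all_order all_algebra.
From mathcomp Require Import zify ring.
Import Order.TTheory GRing.Theory Num.Theory.
Local Open Scope ring_scope.

(* The augmentation aug : R_l -> Z, X_{l,i} |-> p^(l-i), i.e.
   aug x = \sum_i x_i p^(l-i), is a ring homomorphism, and it intertwines the
   three maps of the problem:  aug o res = aug,  aug o ind = p * aug  and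
   aug o jnd = aug^p  (the last one by Fermat's little theorem and the fact
   that a = b mod p^e implies a^p = b^p mod p^(e+1)).
   We show that every word ideal  w(p) subset R_l  is the preimage
   aug^-1(p^(m+1) Z), where m is the number of letters S in w:
   - aug^-1(d Z) is the ideal generated by d and the F_{l,i} (i < l), since
     aug F_{l,i} = 0 and y = \sum_i y_i F_{l,i} + (aug y / d) d;
   - L preserves preimages (aug o res = aug), and S turns aug^-1(p^m Z) into
     aug^-1(p^(m+1) Z): the generators ind x, jnd x have augmentation in
     p^(m+1) Z, and conversely p^(m+1) and the F_{l+1,i} are written
     explicitly as combinations of ind and jnd of elements of aug^-1(p^m Z).
   The theorem follows since all four ideals equal aug^-1(p^(k+1) Z). *)

Lemma coef_ord l (x : R l) (i : 'I_l.+1) : coef l x i = x i.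
Proof. by rewrite /coef ltn_ord inord_val. Qed.

Lemma coef_over l (x : R l) n : (l < n)%N -> coef l x n = 0.
Proof. by move=> h; rewrite /coef ltnNge h. Qed.

Lemma R_ext l (x y : R l) :
  (forall n, (n < l.+1)%N -> coef l x n = coef l y n) -> x = y.
Proof. by move=> h; apply/ffunP => i; rewrite -!coef_ord; exact: h. Qed.

Lemma addRE k (x y : R k) : addR k x y = x + y.
Proof. by apply/ffunP => i; rewrite !ffunE. Qed.

Lemma zeroRE k : zeroR k = 0.
Proof. by apply/ffunP => i; rewrite !ffunE. Qed.

Lemma coef_add l (x y : R l) n : coef l (x + y) n = coef l x n + coef l y n.
Proof. by rewrite /coef; case: ifP => _; rewrite ?ffunE ?addr0. Qed.

Lemma coef_mulz l (x : R l) c n : coef l (x *~ c) n = coef l x n * c.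
Proof. by rewrite /coef; case: ifP => _; rewrite ?ffunMzE ?mulrzz ?mul0r. Qed.

Lemma coef_sub l (x y : R l) n : coef l (x - y) n = coef l x n - coef l y n.
Proof. by rewrite -mulrN1z coef_add coef_mulz mulrN1. Qed.

Lemma coef_ind k l (x : R k) n :
  coef l (ind k l x) n = if (n < l.+1)%N then coef k x n else 0.
Proof. by rewrite /coef; case: ifP => h //; rewrite ffunE inordK. Qed.

Lemma coef_cst l d n : coef l (cst l d) n = if n == l then d else 0.
Proof.
rewrite /coef; case: ifP => [hn|hn]; first by rewrite ffunE inordK.
by case: eqP => // e; move: hn; rewrite e ltnSn.
Qed.

Lemma coef_X l i n : coef l (X l i) n = if (n < l.+1)%N then (n == i)%:R else 0.
Proof. by rewrite /coef; case: ifP => h //; rewrite ffunE inordK. Qed.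

Lemma coef_F p l i n : (n < l.+1)%N ->
  coef l (F p l i) n = (n == i)%:R - (if n == l then (p ^ (l - i))%:Z else 0).
Proof.
move=> h; rewrite /F addRE coef_add coef_X coef_cst h.
by case: (n == l); rewrite ?subr0 ?addr0.
Qed.

Lemma Posz_exp (p n : nat) : (p ^ n)%:Z = (p%:Z) ^+ n.
Proof. by rewrite -!natz natrX. Qed.

Lemma prime_SS {p : nat} : prime p -> exists q, p = q.+2.
Proof.
by move=> /prime_gt1; case: p => [|[|q]] // _; exists q.
Qed.

Lemma dvdz_subXX (d a b : int) n : (d %| a - b)%Z -> (d %| a ^+ n - b ^+ n)%Z.
Proof. by move=> h; rewrite subrXX dvdz_mulr. Qed.

Lemma fermat_int p (m : int) : prime p -> (p %| m ^+ p - m)%Z.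
Proof.
move=> hp; have p0 : (p%:Z != 0) by rewrite eqz_nat -lt0n prime_gt0.
have fermat_nat (n : nat) : (p %| (n ^ p)%:Z - n%:Z)%Z.
  have hle : (n <= n ^ p)%N.
    by case: n => // n; rewrite -{1}(expn1 n.+1) leq_pexp2l // prime_gt0.
  have := fermat_little n hp; move/eqP; rewrite eqn_mod_dvd // => h.
  by rewrite subzn // dvdzE.
set r := (m %% p)%Z.
have fermat_r : (p %| r ^+ p - r)%Z.
  have : 0 <= r by apply: modz_ge0.
  by case: r => [n|n] // _; rewrite -natz -natrX !natz fermat_nat.
have hmr : (p %| m - r)%Z by rewrite {1}(divz_eq m p) addrK dvdz_mull.
have -> : m ^+ p - m = (m ^+ p - r ^+ p) + (r ^+ p - r) - (m - r) by ring.
by rewrite rpredB // rpredD // dvdz_subXX.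
Qed.

Lemma dvdz_pow_lift p e (a b : int) : prime p -> (0 < e)%N ->
  ((p ^ e)%:Z %| a - b)%Z -> ((p ^ e.+1)%:Z %| a ^+ p - b ^+ p)%Z.
Proof.
move=> hp he h.
have hpab : (p %| a - b)%Z by apply: dvdz_trans h; rewrite dvdzE dvdn_exp.
rewrite subrXX expnSr PoszM dvdz_mul //.
set S := \sum_(i < p) _.
have -> : S = \sum_(i < p) (a ^+ (p.-1 - i) * b ^+ i - b ^+ p.-1)
              + (p%:Z * b ^+ p.-1).
  by rewrite sumrB sumr_const card_ord -mulr_natl natz subrK.
rewrite rpredD // ?dvdz_mulr //.
apply: rpred_sum => i _.
have -> : b ^+ p.-1 = b ^+ i * b ^+ (p.-1 - i).
  by rewrite -exprD subnKC // -ltnS prednK ?prime_gt0.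
by rewrite mulrC -mulrBr dvdz_mull // dvdz_subXX.
Qed.

Section Augmentation.

Variable p : nat.

Definition aug {l : nat} (x : R l) : int :=
  \sum_(i < l.+1) x i * (p ^ (l - i))%:Z.

Lemma aug_nat l (x : R l) :
  aug x = \sum_(0 <= i < l.+1) coef l x i * (p ^ (l - i))%:Z.
Proof. by rewrite big_mkord; apply: eq_bigr => i _; rewrite coef_ord. Qed.

Lemma aug_add l (x y : R l) : aug (x + y) = aug x + aug y.
Proof.
by rewrite /aug -big_split; apply: eq_bigr => i _; rewrite ffunE mulrDl.
Qed.

Lemma aug0 l : aug (0 : R l) = 0.
Proof. by rewrite /aug big1 // => i _; rewrite ffunE mul0r. Qed.

Lemma aug_cst l d : aug (cst l d) = d.
Proof.
rewrite aug_nat big_nat_recr //= big_nat_cond big1; last first.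
  by move=> i /andP [/andP [_ hi] _]; rewrite coef_cst (ltn_eqF hi) mul0r.
by rewrite coef_cst eqxx subnn expn0 mulr1 add0r.
Qed.

Lemma aug_X l i : (i <= l)%N -> aug (X l i) = (p ^ (l - i))%:Z.
Proof.
move=> hi; rewrite aug_nat.
transitivity (\sum_(0 <= n < l.+1 | n == i) (p ^ (l - n))%:Z).
  rewrite [RHS]big_mkcond; apply: eq_big_nat => n /andP [_ hn].
  by rewrite coef_X hn; case: eqP => _; rewrite ?mul1r ?mul0r.
by rewrite big_nat1_eq ltnS hi.
Qed.

Lemma aug_F l i : (i <= l)%N -> aug (F p l i) = 0.
Proof. by move=> hi; rewrite /F addRE aug_add aug_X // aug_cst addrN. Qed.

(* The augmentation is multiplicative, because
   p^(l - max(i,j)) p^(l - min(i,j)) = p^(l-i) p^(l-j). *)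
Lemma aug_mul l (x y : R l) : aug (mulR p l x y) = aug x * aug y.
Proof.
rewrite /aug /mulR.
under eq_bigr => m _ do rewrite ffunE big_distrl; rewrite exchange_big /=.
rewrite big_distrl; apply: eq_bigr => i _ /=.
under eq_bigr => m _ do rewrite big_distrl; rewrite exchange_big /=.
rewrite big_distrr; apply: eq_bigr => j _ /=.
have hm : (minn i j < l.+1)%N by rewrite ltnS geq_min -ltnS ltn_ord.
rewrite (bigD1 (inord (minn i j))) //= big1; last first.
  move=> m hm'; case: eqP => [he|]; last by rewrite mul0r.
  by case/eqP: hm'; apply: val_inj; rewrite /= -he inordK.
have pow_minmax : (p ^ (l - maxn i j) * p ^ (l - minn i j)
                   = p ^ (l - i) * p ^ (l - j))%N.
  by case: (leqP i j) => _ //; rewrite mulnC.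
by rewrite (inordK hm) eqxx addr0 -mulrA -PoszM pow_minmax PoszM mulrACA.
Qed.

Lemma aug_res l (y : R l.+1) : aug (res p l l.+1 y) = aug y.
Proof.
have coef_res n : coef l (res p l l.+1 y) n =
    if (n < l)%N then p%:Z * coef l.+1 y n
    else if n == l then \sum_(l <= i < l.+2) (p ^ (l.+1 - i))%:Z * coef l.+1 y i
    else 0.
  rewrite {1}/coef; case: ifP => h; last first.
    have -> : (n < l)%N = false by lia.
    by have -> : (n == l) = false by lia.
  rewrite ffunE inordK // subSnn expn1; case: ifP => // h2.
  by have -> : n == l by lia.
rewrite !aug_nat big_nat_recr //=.
rewrite [in RHS]big_nat_recr //= [in RHS]big_nat_recr //=.
rewrite -addrA; congr (_ + _).
  apply: eq_big_nat => j /andP [_ hj].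
  rewrite coef_res hj.
  have -> : (l.+1 - j = (l - j).+1)%N by lia.
  by rewrite expnS PoszM; ring.
rewrite coef_res ltnn eqxx subnn big_nat_recr ?leqnSn //= big_nat1 subSnn subnn.
by rewrite expn1 expn0; ring.
Qed.

Lemma aug_ind l (x : R l) : aug (ind l l.+1 x) = p%:Z * aug x.
Proof.
rewrite !aug_nat big_nat_recr //= coef_ind ltnSn coef_over // mul0r addr0.
rewrite mulr_sumr; apply: eq_big_nat => j /andP [_ hj].
by rewrite coef_ind (ltn_trans hj (ltnSn _)) subSn // expnS PoszM; ring.
Qed.

Definition tailsum {l : nat} (x : R l) (i : nat) : int :=
  \sum_(i <= s < l.+1) coef l x s * (p ^ (l - s))%:Z.

Lemma tailsum_step l (x : R l) j : (j <= l)%N ->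
  tailsum x j = coef l x j * (p ^ (l - j))%:Z + tailsum x j.+1.
Proof. by move=> h; rewrite /tailsum big_ltn. Qed.

Lemma tailsum_last l (x : R l) : tailsum x l = coef l x l.
Proof. by rewrite /tailsum big_nat1 subnn expn0 mulr1. Qed.

Lemma coef_jnd_lt l (x : R l) j : (j < l)%N ->
  coef l.+1 (jnd p l l.+1 x) j =
  ((tailsum x j ^+ p - tailsum x j.+1 ^+ p) %/ (p ^ (l.+1 - j))%:Z)%Z.
Proof.
move=> hj; rewrite {1}/coef ifT; last by lia.
rewrite /jnd ffunE inordK /=; last by lia.
have -> : (j == l.+1) = false by lia.
have -> : (l <= j)%N = false by lia.
by rewrite subSnn expn1.
Qed.

Lemma coef_jnd_l l (x : R l) :
  coef l.+1 (jnd p l l.+1 x) l = ((coef l x l ^+ p - coef l x l) %/ p%:Z)%Z.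
Proof.
rewrite {1}/coef ltnS leqnSn /jnd ffunE inordK //=.
have -> : (l == l.+1) = false by lia.
by rewrite leqnn subSnn subnn expn1 expn0 expr1.
Qed.

Lemma coef_jnd_top l (x : R l) : coef l.+1 (jnd p l l.+1 x) l.+1 = coef l x l.
Proof. by rewrite {1}/coef ltnSn /jnd ffunE inordK //= eqxx. Qed.

Hypothesis p_prime : prime p.

(* aug o jnd = aug^p: all divisions in jnd are exact, and the sum of the
   coefficients times powers of p telescopes to (tailsum x 0)^p = (aug x)^p. *)
Lemma aug_jnd l (x : R l) : aug (jnd p l l.+1 x) = aug x ^+ p.
Proof.
rewrite aug_nat big_nat_recr //= big_nat_recr //= coef_jnd_top coef_jnd_l.
rewrite subnn expn0 mulr1 subSnn expn1 divzK ?fermat_int //.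
have -> : \sum_(0 <= j < l) coef l.+1 (jnd p l l.+1 x) j * (p ^ (l.+1 - j))%:Z =
          \sum_(0 <= j < l) (tailsum x j ^+ p - tailsum x j.+1 ^+ p).
  apply: eq_big_nat => j /andP [_ hj]; rewrite coef_jnd_lt // divzK //.
  have -> : (l.+1 - j = (l - j).+1)%N by lia.
  apply: dvdz_pow_lift => //; first lia.
  by rewrite tailsum_step ?(ltnW hj) // addrK dvdz_mull.
rewrite (@telescope_sumr_eq _ 0 l (fun k => - tailsum x k ^+ p)) //; last first.
  by move=> k _; rewrite opprK addrC.
by rewrite tailsum_last aug_nat; ring.
Qed.

End Augmentation.

Lemma genE p k G x : gen p k G x <->
  exists s : seq (R k * R k), (forall q, q \in s -> G q.2) /\
    x = \sum_(q <- s) mulR p k q.1 q.2.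
Proof.
have foldr_sum (s : seq (R k * R k)) :
    foldr (fun q acc => addR k (mulR p k q.1 q.2) acc) (zeroR k) s =
    \sum_(q <- s) mulR p k q.1 q.2.
  elim: s => [|q s IH] /=; first by rewrite big_nil zeroRE.
  by rewrite big_cons addRE IH.
by split=> -[s [h1 h2]]; exists s; split => //; rewrite h2 foldr_sum.
Qed.

Lemma mulR_mulzl p k (r g : R k) c : mulR p k (r *~ c) g = mulR p k r g *~ c.
Proof.
apply/ffunP => m; rewrite ffunMzE !ffunE mulrzz big_distrl.
apply: eq_bigr => i _; rewrite big_distrl; apply: eq_bigr => j _ /=.
by case: eqP => _; rewrite ?mul0r // ffunMzE mulrzz; ring.
Qed.

Lemma mulR_cst1 p k (g : R k) : mulR p k (cst k 1) g = g.
Proof.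
have min_k (m : 'I_k.+1) : minn k m = m by apply/minn_idPr; rewrite -ltnS.
apply/ffunP => m; rewrite ffunE (bigD1 ord_max) //=.
rewrite [X in _ + X]big1; last first.
  move=> i hi; rewrite big1 // => j _; rewrite ffunE.
  have -> : ((i : nat) == k) = false.
    by apply/negbTE; apply: contra hi => /eqP h; apply/eqP/val_inj.
  by rewrite !mul0r if_same.
rewrite addr0 (bigD1 m) //= [X in _ + X]big1; last first.
  move=> j hj; rewrite ffunE eqxx mul1r min_k.
  by case: eqP => // h; case/eqP: hj; apply/val_inj.
have -> : maxn k m = k by apply/maxn_idPl; rewrite -ltnS ltn_ord.
by rewrite ffunE eqxx mul1r min_k eqxx subnn expn0 mulr1 addr0.
Qed.

Lemma gen_add p k G x y : gen p k G x -> gen p k G y -> gen p k G (x + y).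
Proof.
move=> /genE [s1 [h1 ->]] /genE [s2 [h2 ->]]; apply/genE; exists (s1 ++ s2).
split; last by rewrite big_cat.
by move=> q; rewrite mem_cat => /orP [] ?; [apply: h1 | apply: h2].
Qed.

Lemma gen_0 p k G : gen p k G 0.
Proof. by apply/genE; exists [::]; split => //; rewrite big_nil. Qed.

Lemma gen_mulz p k G x c : gen p k G x -> gen p k G (x *~ c).
Proof.
move=> /genE [s [h ->]]; apply/genE; exists [seq (q.1 *~ c, q.2) | q <- s].
split; first by move=> q /mapP [q' hq' ->] /=; apply: h.
rewrite big_map; elim: {h} s => [|q s IH]; first by rewrite !big_nil mul0rz.
by rewrite !big_cons /= -IH mulR_mulzl mulrzDl.
Qed.

Lemma gen_gen p k (G : R k -> Prop) g : G g -> gen p k G g.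
Proof.
move=> hg; apply/genE; exists [:: (cst k 1, g)]; split.
  by move=> q; rewrite inE => /eqP ->.
by rewrite big_seq1 mulR_cst1.
Qed.

Definition aug_ideal (p : nat) {l : nat} (d : int) : R l -> Prop :=
  fun y => (d %| aug p y)%Z.

Lemma gen_sub_aug_ideal p k (G : R k -> Prop) (d : int) :
  (forall g, G g -> aug_ideal p d g) ->
  forall x, gen p k G x -> aug_ideal p d x.
Proof.
move=> hG x /genE [s [h ->]]; rewrite /aug_ideal.
rewrite (big_morph (aug p) (@aug_add p k) (aug0 p k)) big_seq.
apply: (big_ind (fun z => (d %| z)%Z)) => //; first by move=> *; exact: rpredD.
by move=> q hq; rewrite aug_mul dvdz_mull // hG //; apply: h.
Qed.

Lemma aug_decomposition {p l : nat} {y : R l} {t d : int} : aug p y = t * d ->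
  y = \sum_(0 <= i < l) F p l i *~ coef l y i + cst l d *~ t.
Proof.
move=> ht; apply: R_ext => n hn.
rewrite coef_add coef_mulz coef_cst.
have sum_coef (f : nat -> R l) :
    coef l (\sum_(0 <= i < l) f i) n = \sum_(0 <= i < l) coef l (f i) n.
  by apply: (big_morph (fun z => coef l z n)) => [z w|]; rewrite ?coef_add //
     /coef; case: ifP => _; rewrite ?ffunE.
rewrite sum_coef; under eq_big_nat => i /andP [_ hi] do
  rewrite coef_mulz coef_F // -/(_ == _).
have [->|hnl] := eqVneq n l.
  have -> : \sum_(0 <= i < l) ((l == i)%:R - (p ^ (l - i))%:Z) * coef l y i =
            - \sum_(0 <= i < l) coef l y i * (p ^ (l - i))%:Z.
    rewrite -sumrN; apply: eq_big_nat => i /andP [_ hi].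
    have -> : (l == i) = false by lia.
    by rewrite add0r mulNr mulrC.
  move: ht; rewrite aug_nat big_nat_recr //= subnn expn0 mulr1 => ht.
  by rewrite mulrC -ht; ring.
rewrite mul0r addr0.
transitivity (\sum_(0 <= i < l | i == n) coef l y i).
  by rewrite big_nat1_eq ifT //; lia.
rewrite big_mkcond; apply: eq_big_nat => i _; rewrite subr0 eq_sym.
by case: eqP => _; rewrite ?mul1r ?mul0r.
Qed.

Lemma gen_of_aug_ideal p l G (d : int) : gen p l G (cst l d) ->
  (forall i, (i < l)%N -> gen p l G (F p l i)) ->
  forall y, aug_ideal p d y -> gen p l G y.
Proof.
move=> hd hF y /dvdzP [t ht]; rewrite (aug_decomposition ht).
apply: gen_add; last exact: gen_mulz.
rewrite big_nat; apply: (big_ind (gen p l G)) => [||i /andP [_ hi]].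
- exact: gen_0.
- exact: gen_add.
- exact/gen_mulz/hF.
Qed.

Lemma J_aug_ideal p l d : ideal_eq l (J p l 0 d) (aug_ideal p d).
Proof.
move=> y; split.
- apply: gen_sub_aug_ideal => g [->|[i [/andP [_ hi] ->]]].
  + by rewrite /aug_ideal aug_cst dvdzz.
  + by rewrite /aug_ideal aug_F ?(ltnW hi) // dvdz0.
- apply: gen_of_aug_ideal => [|i hi]; apply: gen_gen; first by left.
  by right; exists i.
Qed.

Lemma pZ_aug_ideal p : ideal_eq 0 (pZ p) (aug_ideal p p%:Z).
Proof.
move=> y; split; last by apply: gen_of_aug_ideal => //; apply: gen_gen.
by apply: gen_sub_aug_ideal => g ->; rewrite /aug_ideal aug_cst dvdzz.
Qed.

Lemma L_aug_ideal p l I d :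
  ideal_eq l I (aug_ideal p d) -> ideal_eq l.+1 (Lop p l I) (aug_ideal p d).
Proof. by move=> h y; rewrite /Lop h /aug_ideal aug_res. Qed.

Lemma S_ind_jnd (p : nat) {l : nat} {I : R l -> Prop} {x : R l} :
  I x -> Sop p l I (ind l l.+1 x) /\ Sop p l I (jnd p l l.+1 x).
Proof.
by move=> hx; split; apply: gen_gen; exists x; split => //; [left|right].
Qed.

Lemma F_lift p l i : (i < l)%N ->
  F p l.+1 i = ind l l.+1 (F p l i) + F p l.+1 l *~ (p ^ (l - i))%:Z.
Proof.
move=> hi; apply: R_ext => n hn.
rewrite coef_add coef_mulz coef_ind hn.
have [->|hn'] := eqVneq n l.+1.
  rewrite (@coef_over l (F p l i)) // !coef_F // !eqxx.
  have -> : (l.+1 == i) = false by lia.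
  have -> : (l.+1 == l) = false by lia.
  have -> : (l.+1 - i = (l - i).+1)%N by lia.
  by rewrite subSnn expnS expn1 PoszM /=; ring.
rewrite !coef_F ?(negbTE hn') ?subr0 //; last by lia.
have [->|hnl] := eqVneq n l; last by rewrite /=; ring.
have -> : (l == i) = false by lia.
by rewrite /=; ring.
Qed.

Lemma cst_lift p l m : cst l.+1 (p ^ m.+1)%:Z =
  ind l l.+1 (cst l (p ^ m)%:Z) - F p l.+1 l *~ (p ^ m)%:Z.
Proof.
apply: R_ext => n hn.
rewrite coef_sub coef_mulz coef_ind hn coef_F // !coef_cst.
have [->|hn'] := eqVneq n l.+1.
  have -> : (l.+1 == l) = false by lia.
  by rewrite /= subSnn expn1 expnS PoszM; ring.
by case: (n == l) => /=; ring.
Qed.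

Lemma F10_ind_jnd p : prime p ->
  F p 1 0 =
  ind 0 1 (cst 0 p%:Z) *~ ((p%:Z) ^+ (p - 2)) - jnd p 0 1 (cst 0 p%:Z).
Proof.
move=> /prime_SS [q ->]; apply: R_ext => n hn.
rewrite coef_sub coef_mulz coef_ind hn.
case: n hn => [|[|n]] hn //; last first.
  by rewrite coef_jnd_top coef_F // !coef_cst /= expn1; ring.
rewrite coef_jnd_l coef_F // !coef_cst /=.
have -> : (q.+2 - 2 = q)%N by lia.
have -> : q.+2%:Z ^+ q.+2 - q.+2%:Z = (q.+2%:Z ^+ q.+1 - 1) * q.+2%:Z.
  by rewrite exprS; ring.
by rewrite mulzK // exprS; ring.
Qed.

Lemma tailsum_F_top p l j : (j <= l)%N -> tailsum p (F p l.+1 l) j = 0.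
Proof.
move=> hj; rewrite /tailsum (@big_cat_nat _ _ _ l) //=; last by lia.
rewrite big_nat_cond big1 ?add0r; last first.
  move=> s /andP [/andP [_ hs] _]; rewrite coef_F; last by lia.
  have -> : (s == l) = false by lia.
  have -> : (s == l.+1) = false by lia.
  by rewrite /= subr0 mul0r.
rewrite big_ltn // big_nat1 !coef_F // eqxx.
have -> : (l == l.+1) = false by lia.
have -> : (l.+1 == l) = false by lia.
by rewrite subSnn subnn /= expn0 expn1 mulr1 eqxx; ring.
Qed.

Lemma tailsum_F_top_last p l : tailsum p (F p l.+1 l) l.+1 = - p%:Z.
Proof.
rewrite tailsum_last coef_F // eqxx.
have -> : (l.+1 == l) = false by lia.
by rewrite subSnn /= expn1 add0r.
Qed.

Lemma F_top_ind_jnd p l : prime p ->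
  F p l.+2 l.+1 = jnd p l.+1 l.+2 (F p l.+1 l) +
    ind l.+1 l.+2 (F p l.+1 l) *~ ((-1) ^+ p * (p%:Z) ^+ (p - 2)).
Proof.
move=> /prime_SS [q hq]; apply: R_ext => n hn.
rewrite coef_add coef_mulz coef_ind hn.
have [->|hn1] := eqVneq n l.+2.
  rewrite coef_jnd_top (@coef_over l.+1 _ l.+2) // !coef_F // !eqxx.
  have -> : (l.+2 == l.+1) = false by lia.
  have -> : (l.+1 == l) = false by lia.
  by rewrite !subSnn /= expn1; ring.
have [->|hn2] := eqVneq n l.+1.
  rewrite coef_jnd_l !coef_F // !eqxx.
  have -> : (l.+1 == l) = false by lia.
  have -> : (l.+1 == l.+2) = false by lia.
  rewrite subSnn /= expn1 !add0r hq.
  have -> : (q.+2 - 2 = q)%N by lia.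
  have -> : (- q.+2%:Z) ^+ q.+2 - - q.+2%:Z =
            ((-1) ^+ q.+2 * q.+2%:Z ^+ q.+1 + 1) * q.+2%:Z.
    by rewrite (exprNn (q.+2%:Z)) !exprS; ring.
  by rewrite mulzK // !exprS; ring.
rewrite coef_jnd_lt; last by lia.
rewrite !coef_F ?(negbTE hn2); [|lia|lia].
have -> : (n == l.+2) = false by lia.
have [->|hnl] := eqVneq n l.
  rewrite tailsum_F_top // tailsum_F_top_last /= hq.
  have -> : (q.+2 - 2 = q)%N by lia.
  have -> : (l.+2 - l = 2)%N by lia.
  have -> : (0 : int) ^+ q.+2 - (- q.+2%:Z) ^+ q.+2 =
            (- ((-1) ^+ q.+2 * q.+2%:Z ^+ q)) * (q.+2 ^ 2)%N%:Z.
    by rewrite exprS mul0r (exprNn (q.+2%:Z)) Posz_exp !exprS; ring.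
  by rewrite mulzK // !exprS; ring.
rewrite !tailsum_F_top; [|lia|lia].
by rewrite expr0n [X in (X %/ _)%Z]subrr div0z /= subr0 mul0r addr0.
Qed.

(* The top generator F_{l+1,l} lies in S(aug^-1(p^m Z)); in R_1 this needs
   the base ideal to be (p), i.e. m = 1. *)
Lemma F_top_in_S {p l : nat} {I : R l -> Prop} {m : nat} :
  prime p -> (0 < l)%N \/ m = 1%N ->
  ideal_eq l I (aug_ideal p (p ^ m)%:Z) -> Sop p l I (F p l.+1 l).
Proof.
move=> hp hl hI; case: l I hl hI => [|l] I hl hI.
  have hm1 : m = 1%N by case: hl.
  have hx : I (cst 0 p%:Z) by apply/hI; rewrite /aug_ideal aug_cst hm1 expn1.
  have [hind hjnd] := S_ind_jnd p hx.
  by rewrite F10_ind_jnd // -mulrN1z; apply: gen_add; apply: gen_mulz.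
have hx : I (F p l.+1 l) by apply/hI; rewrite /aug_ideal aug_F // dvdz0.
have [hind hjnd] := S_ind_jnd p hx.
by rewrite F_top_ind_jnd //; apply: gen_add => //; apply: gen_mulz.
Qed.

Lemma S_aug_ideal p l I m : prime p -> (0 < m)%N -> (0 < l)%N \/ m = 1%N ->
  ideal_eq l I (aug_ideal p (p ^ m)%:Z) ->
  ideal_eq l.+1 (Sop p l I) (aug_ideal p (p ^ m.+1)%:Z).
Proof.
move=> hp hm hl hI y; split.
  apply: gen_sub_aug_ideal => g [x [/hI hx [->|->]]]; rewrite /aug_ideal.
    by rewrite aug_ind expnSr PoszM mulrC dvdz_mul.
  rewrite aug_jnd // (@dvdz_trans ((p ^ (m * p))%:Z)) //.
    by rewrite dvdzE dvdn_exp2l //; have [q ->] := prime_SS hp; nia.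
  by rewrite expnM Posz_exp dvdz_exp2r.
apply: gen_of_aug_ideal => [|i hi].
  have hx : I (cst l (p ^ m)%:Z) by apply/hI; rewrite /aug_ideal aug_cst.
  rewrite cst_lift -mulrN1z; apply: gen_add; first by case: (S_ind_jnd p hx).
  by do 2 apply: gen_mulz; exact: F_top_in_S hp hl hI.
have [->|hil] := eqVneq i l; first exact: F_top_in_S hp hl hI.
have hil' : (i < l)%N by lia.
have hx : I (F p l i).
  by apply/hI; rewrite /aug_ideal aug_F ?(ltnW hil') // dvdz0.
rewrite F_lift //; apply: gen_add; first by case: (S_ind_jnd p hx).
by apply: gen_mulz; exact: F_top_in_S hp hl hI.
Qed.

Lemma word_aug_ideal {p l : nat} {w : seq bool} : prime p -> size w = l ->
  ideal_eq l (word_ideal p l w) (aug_ideal p (p ^ (count id w).+1)%:Z).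
Proof.
move=> hp; elim: l w => [|l IH] [|b w] //= hs.
  by rewrite expn1; exact: pZ_aug_ideal.
have hw : size w = l by case: hs.
case: b => /=; last exact: L_aug_ideal (IH w hw).
apply: S_aug_ideal (IH w hw) => //.
by case: l {IH hs} hw => [|l] hw; [right; case: w hw | left].
Qed.

Lemma word_ideal_count p l (w1 w2 : seq bool) : prime p ->
  size w1 = l -> size w2 = l -> count id w1 = count id w2 ->
  ideal_eq l (word_ideal p l w1) (word_ideal p l w2).
Proof.
move=> hp h1 h2 hc y.
by rewrite (word_aug_ideal hp h1) (word_aug_ideal hp h2) hc.
Qed.

Lemma mixed_size s (a b : 'I_s -> nat) :
  size (mixed_word s a b) = (\sum_(i < s) a i + \sum_(i < s) b i)%N.
Proof.
rewrite /mixed_word size_flatten /shape -map_comp sumnE big_map big_enum /=.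
by rewrite -big_split /=; apply: eq_bigr => i _; rewrite size_cat !size_nseq.
Qed.

Lemma mixed_count s (a b : 'I_s -> nat) :
  count id (mixed_word s a b) = (\sum_(i < s) a i)%N.
Proof.
rewrite /mixed_word count_flatten -map_comp sumnE big_map big_enum /=.
by apply: eq_bigr => i _; rewrite count_cat !count_nseq /= mul1n mul0n addn0.
Qed.

Theorem proposition6 (p : nat) (hp : prime p) (r l s : nat) (a b : 'I_s -> nat)
  (hlr : (l <= r)%N)
  (hsum : (\sum_(i < s) a i + \sum_(i < s) b i)%N = l) :
  let k := (\sum_(i < s) a i)%N in
  ideal_eq l (word_ideal p l (mixed_word s a b))
           (word_ideal p l (nseq k true ++ nseq (l - k) false)) /\
  ideal_eq l (word_ideal p l (nseq k true ++ nseq (l - k) false))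
           (word_ideal p l (nseq (l - k) false ++ nseq k true)) /\
  ideal_eq l (word_ideal p l (nseq (l - k) false ++ nseq k true))
           (J p l 0 (p ^ k.+1)%:Z).
Proof.
move=> k.
have hk : (k <= l)%N by rewrite -hsum leq_addr.
have size_SL : size (nseq k true ++ nseq (l - k) false) = l.
  by rewrite size_cat !size_nseq subnKC.
have size_LS : size (nseq (l - k) false ++ nseq k true) = l.
  by rewrite size_cat !size_nseq subnK.
have count_SL : count id (nseq k true ++ nseq (l - k) false) = k.
  by rewrite count_cat !count_nseq /= mul1n mul0n addn0.
have count_LS : count id (nseq (l - k) false ++ nseq k true) = k.
  by rewrite count_cat !count_nseq /= mul1n mul0n.
split; last split.
- by apply: word_ideal_count; rewrite ?mixed_size ?mixed_count ?count_SL.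
- by apply: word_ideal_count; rewrite ?count_SL ?count_LS.
- move=> y; rewrite (word_aug_ideal hp size_LS) count_LS.
  by rewrite (J_aug_ideal p l _ y).
Qed.
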